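(* For a nonnegative integer $d$ let $P_d(x)=\sum_{i=0}^{d}\frac{(x_i)^2(x_{d-i})^2}{i!\,(d-i)!}$, where $x_i=x(x-1)\cdots(x-i+1)$, and let $R_d(x)$ be the remainder upon dividing $P_{d+1}(x)$ by $P_d(x)$, i.e. $R_d(x)=P_{d+1}(x)-\left(\frac{2}{d+1}x^2-\frac{2d}{d+1}x+\frac d2\right)P_d(x)$. Then for every integer $d\ge5$ and every real $x>d/2$, $$-0.5<\frac{R_d(x)}{P_d(x)}<0.$$ *)

From mathcomp Require Import all_boot all_order all_algebra.
Set Implicit Arguments. Unset Strict Implicit. Unset Printing Implicit Defensive.
Import Order.TTheory GRing.Theory Num.Theory.
Local Open Scope ring_scope.

Definition ffact {R : pzRingType} (x : R) (i : nat) : R :=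
  \prod_(j < i) (x - j%:R).

Definition Pd {R : fieldType} (d : nat) (x : R) : R :=
  \sum_(i < d.+1) (ffact x i) ^+ 2 * (ffact x (d - i)) ^+ 2
                    / ((i`!)%:R * ((d - i)`!)%:R).

Definition Rd {R : fieldType} (d : nat) (x : R) : R :=
  Pd d.+1 x - (2 / (d.+1)%:R * x ^+ 2 - 2 * d%:R / (d.+1)%:R * x + d%:R / 2) * Pd d x.

From mathcomp Require Import all_boot all_order all_algebra.
From mathcomp Require Import ring lra zify.
Set Implicit Arguments.
Unset Strict Implicit.
Unset Printing Implicit Defensive.
Import Order.TTheory GRing.Theory Num.Theory.
Local Open Scope ring_scope.

(* Write w_k for the k-th summand of P_n, v = x - n/2, A = P_n(x) = sum_k w_k and
   B = sum_k w_k (k - n/2)^2.  The identities k w^(n+1)_k = w^n_(k-1) (x-k+1)^2 and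
   (n+1-k) w^(n+1)_k = w^n_k (x-n+k)^2 express P_(n+1) through A and B, and P_(n+2)
   through A, B and the fourth central moment, which a discrete Stein identity
   (summation by parts) reduces to A and B.  The outcome is (n+2) R_(n+1) = -4 v B < 0,
   while R_(n+1) + P_(n+1)/2 is a positive multiple of (n+2) v^2 A - D B, where
   D = 4 (n+1) v - n - 2; this is positive because
   sum_k w_k (D (k - n/2)^2 - (n+2) v^2)^2 >= 0, rewritten via the Stein identity. *)

Section Recurrence.
Variable R : numFieldType.
Implicit Types (x a b c : R) (f g : nat -> R).

Definition Pd_term (d : nat) x (i : nat) : R :=
  (ffact x i) ^+ 2 * (ffact x (d - i)) ^+ 2 / ((i`!)%:R * ((d - i)`!)%:R).

Definition Pd_sum (d : nat) x g : R := \sum_(i < d.+1) Pd_term d x i * g i.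

Lemma Pd_sum1 d x : Pd_sum d x (fun=> 1) = Pd d x.
Proof. by apply: eq_bigr => i _; rewrite mulr1. Qed.

Lemma eq_Pd_sum d x f g : f =1 g -> Pd_sum d x f = Pd_sum d x g.
Proof. by move=> fg; apply: eq_bigr => i _; rewrite fg. Qed.

Lemma Pd_sumD d x f g :
  Pd_sum d x (fun k => f k + g k) = Pd_sum d x f + Pd_sum d x g.
Proof. by rewrite /Pd_sum -big_split; apply: eq_bigr => i _; rewrite mulrDr. Qed.

Lemma Pd_sumZ d x c g : Pd_sum d x (fun k => c * g k) = c * Pd_sum d x g.
Proof. by rewrite /Pd_sum mulr_sumr; apply: eq_bigr => i _; rewrite mulrCA. Qed.

Lemma Pd_sum_affine d x a b g :
  Pd_sum d x (fun k => a + b * g k) = a * Pd d x + b * Pd_sum d x g.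
Proof.
rewrite -Pd_sum1 /Pd_sum !mulr_sumr -big_split /=.
by apply: eq_bigr => i _; ring.
Qed.

Lemma ffactS x k : ffact x k.+1 = ffact x k * (x - k%:R).
Proof. by rewrite /ffact big_ord_recr. Qed.

Lemma natr_fact_neq0 k : (k`!)%:R != 0 :> R.
Proof. by rewrite pnatr_eq0 -lt0n fact_gt0. Qed.

Lemma Pd_termSS d x k : (k <= d)%N ->
  Pd_term d.+1 x k.+1 * k.+1%:R = Pd_term d x k * (x - k%:R) ^+ 2.
Proof.
move=> le_kd; rewrite /Pd_term subSS ffactS factS natrM.
have k1_neq0 : 1 + k%:R != 0 :> R by rewrite addrC natr1 pnatr_eq0.
by field; rewrite !natr_fact_neq0 k1_neq0.
Qed.

Lemma Pd_termS d x k : (k <= d)%N ->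
  Pd_term d.+1 x k * (d.+1%:R - k%:R) = Pd_term d x k * (x - (d%:R - k%:R)) ^+ 2.
Proof.
move=> le_kd; rewrite /Pd_term subSn // ffactS factS natrM natrB //.
have dk1_neq0 : (d - k).+1%:R != 0 :> R by rewrite pnatr_eq0.
move: dk1_neq0; rewrite -addn1 natrD natrB // => dk1_neq0.
by field; rewrite !natr_fact_neq0 dk1_neq0.
Qed.

Lemma Pd_sum_succ_index d x g :
  Pd_sum d.+1 x (fun i => i%:R * g i) = Pd_sum d x (fun k => (x - k%:R) ^+ 2 * g k.+1).
Proof.
rewrite /Pd_sum big_ord_recl /= mul0r mulr0 add0r; apply: eq_bigr => k _.
by rewrite /bump add1n mulrA Pd_termSS 1?mulrA // -ltnS.
Qed.

Lemma Pd_sum_succ_coindex d x g :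
  Pd_sum d.+1 x (fun i => (d.+1%:R - i%:R) * g i)
  = Pd_sum d x (fun k => (x - (d%:R - k%:R)) ^+ 2 * g k).
Proof.
rewrite /Pd_sum big_ord_recr /= subrr mul0r mulr0 addr0; apply: eq_bigr => k _.
by rewrite [LHS]mulrA Pd_termS 1?mulrA // -ltnS.
Qed.

Lemma Pd_sum_succ d x g :
  d.+1%:R * Pd_sum d.+1 x g
  = Pd_sum d x (fun k => (x - k%:R) ^+ 2 * g k.+1 + (x - (d%:R - k%:R)) ^+ 2 * g k).
Proof.
rewrite Pd_sumD -Pd_sum_succ_index -Pd_sum_succ_coindex -Pd_sumD /Pd_sum mulr_sumr.
by apply: eq_bigr => i _; ring.
Qed.

(* The two halves of stein_poly are the left-hand sides of Pd_sum_succ_coindex and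
   Pd_sum_succ_index for matching test functions, whose right-hand sides coincide. *)
Definition stein_poly (N x : R) (k : nat) : R :=
  (x - k%:R) ^+ 2 * (N - k%:R) * (k%:R - N / 2 + 1 / 2)
  - k%:R * (x - N + k%:R) ^+ 2 * (k%:R - N / 2 - 1 / 2).

Lemma Pd_sum_stein d x : Pd_sum d x (stein_poly d%:R x) = 0.
Proof.
case: d => [|d]; first by rewrite /Pd_sum big_ord1 /stein_poly /=; ring.
pose g i := (x - i%:R) ^+ 2 * (i%:R - d.+1%:R / 2 + 1 / 2).
pose h i := (x - d.+1%:R + i%:R) ^+ 2 * (i%:R - d.+1%:R / 2 - 1 / 2).
have -> : Pd_sum d.+1 x (stein_poly d.+1%:R x)
    = Pd_sum d.+1 x (fun i => (d.+1%:R - i%:R) * g i)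
      - Pd_sum d.+1 x (fun i => i%:R * h i).
  by rewrite /Pd_sum -sumrB; apply: eq_bigr => i _; rewrite /stein_poly /g /h; ring.
rewrite Pd_sum_succ_index Pd_sum_succ_coindex /Pd_sum -sumrB.
by apply: big1 => k _; rewrite /g /h; field.
Qed.

Lemma Pd_sum_add_stein d x c f :
  Pd_sum d x (fun k => f k + c * stein_poly d%:R x k) = Pd_sum d x f.
Proof. by rewrite Pd_sumD Pd_sumZ Pd_sum_stein mulr0 addr0. Qed.
End Recurrence.

Definition Pd_moment2 {R : numFieldType} (n : nat) (x : R) : R :=
  Pd_sum n x (fun k => (k%:R - n%:R / 2) ^+ 2).

Definition Dpoly {R : numFieldType} (N v : R) := 4 * (N + 1) * v - N - 2.
Definition bpoly {R : numFieldType} (N v : R) := v ^+ 2 + (N - 1) * v - N / 4.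
(* Kpoly and Fpoly are the coefficients obtained when the square in
   Pd_sum_sqr_identity is expanded and its fourth moment eliminated. *)
Definition Kpoly {R : numFieldType} (N v : R) :=
  2 * (N + 2) * v ^+ 2 + Dpoly N v * bpoly N v.
Definition Fpoly {R : numFieldType} (N v : R) :=
  (N + 2) ^+ 2 * v ^+ 2 + (N + 2) * bpoly N v * Dpoly N v - N * Dpoly N v ^+ 2 / 4.

Section Moments.
Variables (R : numFieldType) (n : nat) (x : R).
Local Notation N := (n%:R : R).
Local Notation v := (x - n%:R / 2).

Lemma natr_add1_neq0 : N + 1 != 0.
Proof. by rewrite natr1 pnatr_eq0. Qed.

Lemma natr_add2_neq0 : N + 2 != 0.
Proof. by rewrite -[2]/(1 + 1) addrA !natr1 pnatr_eq0. Qed.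

Lemma Pd_succE : Pd n.+1 x * (N + 1) = 2 * v ^+ 2 * Pd n x + 2 * Pd_moment2 n x.
Proof.
rewrite -[Pd n.+1 x]Pd_sum1 mulrC natr1 Pd_sum_succ -Pd_sum_affine.
by apply: eq_Pd_sum => k /=; field.
Qed.

Lemma Pd_succ2E :
  Pd n.+2 x * ((N + 1) * (N + 2))
  = 2 * v ^+ 2 * (2 * v ^+ 2 - 2 * v + (N + 2) / 2) * Pd n x
    + (4 * v ^+ 2 - 4 * (N + 2) * v + N + 2) * Pd_moment2 n x.
Proof.
have -> : Pd n.+2 x * ((N + 1) * (N + 2))
    = n.+1%:R * (n.+2%:R * Pd_sum n.+2 x (fun=> 1)) by rewrite Pd_sum1 -!natr1; ring.
rewrite !Pd_sum_succ -(Pd_sum_add_stein _ _ 2) -Pd_sum_affine.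
by apply: eq_Pd_sum => k /=; rewrite /stein_poly; field.
Qed.

Lemma Rd_succE : Rd n.+1 x * (N + 2) = - 4 * v * Pd_moment2 n x.
Proof.
have N1 := natr_add1_neq0; have N2 := natr_add2_neq0; rewrite /Rd.
have -> : Pd n.+1 x = (2 * v ^+ 2 * Pd n x + 2 * Pd_moment2 n x) / (N + 1).
  by rewrite -Pd_succE mulfK.
have -> : Pd n.+2 x = (2 * v ^+ 2 * (2 * v ^+ 2 - 2 * v + (N + 2) / 2) * Pd n x
    + (4 * v ^+ 2 - 4 * (N + 2) * v + N + 2) * Pd_moment2 n x) / ((N + 1) * (N + 2)).
  by rewrite -Pd_succ2E mulfK // mulf_neq0.
by field; rewrite N1 addrC N2.
Qed.

Lemma Rd_succ_halfE :
  (Rd n.+1 x + Pd n.+1 x / 2) * ((N + 1) * (N + 2))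
  = (N + 2) * v ^+ 2 * Pd n x - Dpoly N v * Pd_moment2 n x.
Proof.
have -> : (Rd n.+1 x + Pd n.+1 x / 2) * ((N + 1) * (N + 2))
    = Rd n.+1 x * (N + 2) * (N + 1) + Pd n.+1 x * (N + 1) * (N + 2) / 2 by ring.
by rewrite Rd_succE Pd_succE /Dpoly; field.
Qed.

Lemma Pd_sum_sqr_identity :
  Pd_sum n x (fun k => (Dpoly N v * (k%:R - N / 2) ^+ 2 - (N + 2) * v ^+ 2) ^+ 2)
  = Kpoly N v * ((N + 2) * v ^+ 2 * Pd n x - Dpoly N v * Pd_moment2 n x)
    - v ^+ 2 * Fpoly N v * Pd n x.
Proof.
have -> : Kpoly N v * ((N + 2) * v ^+ 2 * Pd n x - Dpoly N v * Pd_moment2 n x)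
    - v ^+ 2 * Fpoly N v * Pd n x
    = (Kpoly N v * (N + 2) * v ^+ 2 - v ^+ 2 * Fpoly N v) * Pd n x
      + (- Kpoly N v * Dpoly N v) * Pd_moment2 n x by ring.
rewrite -(Pd_sum_add_stein _ _ (Dpoly N v ^+ 2 / 2)) -Pd_sum_affine.
by apply: eq_Pd_sum => k /=; rewrite /stein_poly /Kpoly /Fpoly /Dpoly /bpoly; field.
Qed.

End Moments.

Section Positivity.
Variable R : realFieldType.
Implicit Types (x : R) (g : nat -> R).

Lemma ffact_gt0 x m : m%:R < x + 1 -> 0 < ffact x m.
Proof.
move=> m_lt; apply: prodr_gt0 => j _; rewrite subr_gt0.
have : (j.+1%:R <= m%:R :> R) by rewrite ler_nat.
by rewrite -natr1; lra.
Qed.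

Lemma Pd_term_ge0 d x k : 0 <= Pd_term d x k.
Proof. by apply: divr_ge0; apply: mulr_ge0; rewrite ?sqr_ge0 ?ler0n. Qed.

Lemma Pd_term_gt0 d x k :
  k%:R < x + 1 -> (d - k)%:R < x + 1 -> 0 < Pd_term d x k.
Proof.
move=> k_lt dk_lt; apply: divr_gt0; apply: mulr_gt0;
  by rewrite ?exprn_gt0 ?ffact_gt0 ?ltr0n ?fact_gt0.
Qed.

Lemma Pd_sum_ge0 d x g : (forall k, 0 <= g k) -> 0 <= Pd_sum d x g.
Proof. by move=> g_ge0; apply: sumr_ge0 => i _; rewrite mulr_ge0 ?Pd_term_ge0. Qed.

Lemma Pd_sum_gt0 d x g k : (k <= d)%N -> (forall i, 0 <= g i) ->
  0 < Pd_term d x k -> 0 < g k -> 0 < Pd_sum d x g.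
Proof.
rewrite -ltnS => k_le g_ge0 term_gt0 gk_gt0.
rewrite /Pd_sum (bigD1 (Ordinal k_le)) //=.
apply: ltr_pwDl; first exact: mulr_gt0.
by apply: sumr_ge0 => i _; rewrite mulr_ge0 ?Pd_term_ge0.
Qed.

(* At this index the weight is positive and k - n/2 is nonzero. *)
Lemma Pd_term_mid_gt0 n x : (0 < n)%N -> n%:R / 2 < x -> 0 < Pd_term n x n./2.+1.
Proof.
move=> n_gt0 x_gt; have half_le : n./2%:R * 2 <= n%:R :> R by rewrite -natrM ler_nat; lia.
apply: Pd_term_gt0; first by rewrite -natr1 ltrD2r; lra.
have : (n - n./2.+1)%:R <= n./2%:R :> R by rewrite ler_nat; lia.
lra.
Qed.

Lemma Pd_gt0 n x : (0 < n)%N -> n%:R / 2 < x -> 0 < Pd n x.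
Proof.
move=> n_gt0 x_gt; rewrite -Pd_sum1.
by apply: (Pd_sum_gt0 (k := n./2.+1)) => //; [lia | exact: Pd_term_mid_gt0].
Qed.

Lemma Pd_moment2_gt0 n x : (0 < n)%N -> n%:R / 2 < x -> 0 < Pd_moment2 n x.
Proof.
move=> n_gt0 x_gt; apply: (Pd_sum_gt0 (k := n./2.+1)) => //.
- by lia.
- by move=> i; apply: sqr_ge0.
- exact: Pd_term_mid_gt0.
have mid_gt : n%:R < n./2.+1%:R * 2 :> R by rewrite -natrM ltr_nat; lia.
by apply: exprn_gt0; lra.
Qed.

Lemma Dpoly_gt0 (N v : R) : 4 <= N -> 1 / 2 < v -> 0 < Dpoly N v.
Proof. by move=> N_ge v_gt; rewrite /Dpoly; nra. Qed.

Lemma Kpoly_gt0 (N v : R) : 4 <= N -> 1 / 2 < v -> 0 < Kpoly N v.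
Proof.
move=> N_ge v_gt; have D_gt0 := Dpoly_gt0 N_ge v_gt.
have b_gt0 : 0 < bpoly N v by rewrite /bpoly; nra.
have := mulr_gt0 D_gt0 b_gt0; rewrite /Kpoly; nra.
Qed.

Lemma Fpoly_gt0 (N v : R) : 4 <= N -> 1 / 2 < v -> 0 < Fpoly N v.
Proof.
move=> N_ge v_gt.
have -> : Fpoly N v = 11 + 9 / 2 * (N - 4) + 1 / 2 * (N - 4) ^+ 2
  + (v - 1 / 2) * (62 + 27 * (N - 4) + 3 * (N - 4) ^+ 2)
  + (v - 1 / 2) ^+ 2 * (140 + 58 * (N - 4) + 6 * (N - 4) ^+ 2)
  + (v - 1 / 2) ^+ 3 * (120 + 44 * (N - 4) + 4 * (N - 4) ^+ 2).
  by rewrite /Fpoly /bpoly /Dpoly; field.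
set s := v - 1 / 2; set m := N - 4.
have s_gt0 : 0 < s by rewrite /s; lra.
have m_ge0 : 0 <= m by rewrite /m; lra.
have m2_ge0 := sqr_ge0 m.
have : 0 <= s * (62 + 27 * m + 3 * m ^+ 2) by apply: mulr_ge0; lra.
have : 0 <= s ^+ 2 * (140 + 58 * m + 6 * m ^+ 2) by apply: mulr_ge0; [apply: sqr_ge0 | lra].
have : 0 <= s ^+ 3 * (120 + 44 * m + 4 * m ^+ 2) by apply: mulr_ge0; [apply: exprn_ge0 | ]; lra.
lra.
Qed.

Lemma Pd_moment2_lt n x : (4 <= n)%N -> 1 / 2 < x - n%:R / 2 ->
  Dpoly n%:R (x - n%:R / 2) * Pd_moment2 n x
  < (n%:R + 2) * (x - n%:R / 2) ^+ 2 * Pd n x.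
Proof.
set v := x - n%:R / 2 => n_ge4 v_gt.
have N_ge4 : 4 <= n%:R :> R by rewrite (ler_nat R 4 n).
have x_gt : n%:R / 2 < x by rewrite /v in v_gt; lra.
have sqr_sum_ge0 : 0 <= Pd_sum n x
    (fun k => (Dpoly n%:R v * (k%:R - n%:R / 2) ^+ 2 - (n%:R + 2) * v ^+ 2) ^+ 2).
  by apply: Pd_sum_ge0 => k; apply: sqr_ge0.
rewrite Pd_sum_sqr_identity -/v in sqr_sum_ge0.
have F_gt0 : 0 < v ^+ 2 * Fpoly n%:R v * Pd n x.
  apply: mulr_gt0; last by apply: Pd_gt0 => //; lia.
  by apply: mulr_gt0; [apply: exprn_gt0; lra | exact: Fpoly_gt0].
rewrite -subr_gt0 -(pmulr_rgt0 _ (Kpoly_gt0 N_ge4 v_gt)); lra.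
Qed.

End Positivity.

Theorem lemma1p5 (R : realFieldType) (d : nat) (x : R) :
  (5 <= d)%N -> d%:R / 2 < x ->
  - (1 / 2) < Rd d x / Pd d x /\ Rd d x / Pd d x < 0.
Proof.
case: d => [//|n] n_ge4 x_gt; rewrite -natr1 in x_gt.
have n_gt0 : (0 < n)%N by lia.
have v_gt : 1 / 2 < x - n%:R / 2 by lra.
have N1_gt0 : 0 < n%:R + 1 :> R by rewrite natr1 ltr0Sn.
have N2_gt0 : 0 < n%:R + 2 :> R by rewrite ltr_wpDl ?ler0n.
have A_gt0 : 0 < Pd n x by apply: Pd_gt0 => //; lra.
have B_gt0 : 0 < Pd_moment2 n x by apply: Pd_moment2_gt0 => //; lra.
have P_gt0 : 0 < Pd n.+1 x.
  have vA_gt0 : 0 < (x - n%:R / 2) ^+ 2 * Pd n x by rewrite mulr_gt0 ?exprn_gt0 //; lra.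
  by rewrite -(pmulr_lgt0 _ N1_gt0) Pd_succE; lra.
have R_lt0 : Rd n.+1 x < 0.
  have vB_gt0 : 0 < (x - n%:R / 2) * Pd_moment2 n x by rewrite mulr_gt0 //; lra.
  by rewrite -(pmulr_llt0 _ N2_gt0) Rd_succE; lra.
have R_gt_half : 0 < Rd n.+1 x + Pd n.+1 x / 2.
  rewrite -(pmulr_lgt0 _ (mulr_gt0 N1_gt0 N2_gt0)) Rd_succ_halfE subr_gt0.
  exact: Pd_moment2_lt.
split; last by rewrite pmulr_llt0 ?invr_gt0.
by rewrite ltr_pdivlMr //; lra.
Qed.
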